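(* Let $n\ge2$ and let $G\subsetneq\mathbb{R}^n$ be a domain. Then for all $x,y\in G$, $$\frac{1}{\sqrt2}\,p_G(x,y)\le s_G(x,y)\le\sqrt2\,p_G(x,y),$$ and this inequality is sharp (the constants $1/\sqrt2$ and $\sqrt2$ cannot be improved over all such domains).
   Context: A domain is a non-empty, open, connected set; here it is a proper subset of $\mathbb{R}^n$. $d_G(x)=\inf\{|x-z|:z\in\partial G\}$, $s_G(x,y)=\frac{|x-y|}{\inf_{z\in\partial G}(|x-z|+|z-y|)}$, $p_G(x,y)=\frac{|x-y|}{\sqrt{|x-y|^2+4d_G(x)d_G(y)}}$. *)

From HB Require Import structures.
From mathcomp Require Import all_boot all_order all_algebra.
From mathcomp Require Import all_classical all_reals all_analysis.
Set Implicit Arguments. Unset Strict Implicit. Unset Printing Implicit Defensive.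
Import Order.TTheory GRing.Theory Num.Theory.
Import numFieldNormedType.Exports.
Local Open Scope classical_set_scope.
Local Open Scope ring_scope.

Section Defs.
Variables (R : realType) (n : nat).

(* Euclidean norm |v| on R^n (MathComp's own norm on matrices is the sup norm). *)
Definition enorm (v : 'rV[R]_n) : R := Num.sqrt (\sum_(i < n) v ord0 i ^+ 2).

(* topological boundary  dG = closure G \ interior G  (product topology = Euclidean topology) *)
Definition bdry (G : set 'rV[R]_n) : set 'rV[R]_n := closure G `\` interior G.

Definition domain (G : set 'rV[R]_n) : Prop :=
  open G /\ connected G /\ G !=set0 /\ G != setT.

Definition dG (G : set 'rV[R]_n) (x : 'rV[R]_n) : R :=
  inf [set enorm (x - z) | z in bdry G].

Definition sG (G : set 'rV[R]_n) (x y : 'rV[R]_n) : R :=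
  enorm (x - y) / inf [set enorm (x - z) + enorm (z - y) | z in bdry G].

Definition pG (G : set 'rV[R]_n) (x y : 'rV[R]_n) : R :=
  enorm (x - y) / Num.sqrt (enorm (x - y) ^+ 2 + 4 * dG G x * dG G y).

End Defs.

From HB Require Import structures.
From mathcomp Require Import all_boot all_order all_algebra.
From mathcomp Require Import all_classical all_reals all_analysis.
From mathcomp Require Import ring lra.
Import Order.TTheory GRing.Theory Num.Theory.
Import numFieldNormedType.Exports.
Local Open Scope classical_set_scope.
Local Open Scope ring_scope.

(* With t = |x - y|, d1 = d_G(x), d2 = d_G(y) and m the denominator of s_G, the
   triangle inequality gives t <= m, d1 + d2 <= m and m <= t + 2 min(d1, d2)
   (walk from x or y to a nearest boundary point and back).  These three bounds
   alone force m^2 / 2 <= t^2 + 4 d1 d2 <= 2 m^2, which is the inequality since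
   s_G = t / m and p_G = t / sqrt(t^2 + 4 d1 d2); the boundary is nonempty because
   a segment joining a point of G to a point outside G is connected.  Both
   constants are attained in R^n minus {0, 4 e_0}, which is connected as n >= 2:
   at e_0, 3 e_0 for 1/sqrt 2 and at -e_0, e_0 for sqrt 2. *)

Lemma sum_CauchySchwarz (R : realFieldType) (I : finType) (a b : I -> R) :
  (\sum_i a i * b i) ^+ 2 <= (\sum_i a i ^+ 2) * (\sum_i b i ^+ 2).
Proof.
have lagrange : \sum_i \sum_j (a i * b j - a j * b i) ^+ 2 =
    2 * ((\sum_i a i ^+ 2) * (\sum_i b i ^+ 2) - (\sum_i a i * b i) ^+ 2).
  transitivity (\sum_i \sum_j
      (a i ^+ 2 * b j ^+ 2 + b i ^+ 2 * a j ^+ 2 - (2 * (a i * b i)) * (a j * b j))).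
    by apply: eq_bigr => i _; apply: eq_bigr => j _; ring.
  under eq_bigr => i _ do rewrite sumrB big_split.
  by rewrite sumrB big_split -!big_distrlr -mulr_sumr /=; ring.
have : 0 <= \sum_i \sum_j (a i * b j - a j * b i) ^+ 2.
  by apply: sumr_ge0 => i _; apply: sumr_ge0 => j _; exact: sqr_ge0.
by rewrite lagrange pmulr_rge0 // subr_ge0.
Qed.

Section EuclideanNorm.
Context {R : realType} {n : nat}.
Implicit Types u v w : 'rV[R]_n.

Lemma enorm_ge0 u : 0 <= enorm u.
Proof. exact: sqrtr_ge0. Qed.

Lemma enormN u : enorm (- u) = enorm u.
Proof. by congr Num.sqrt; apply: eq_bigr => i _; rewrite mxE sqrrN. Qed.

Lemma enorm_distC u v : enorm (u - v) = enorm (v - u).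
Proof. by rewrite -enormN opprB. Qed.

Lemma enormD u v : enorm (u + v) <= enorm u + enorm v.
Proof.
rewrite /enorm; set A := \sum_i u ord0 i ^+ 2; set B := \sum_i v ord0 i ^+ 2.
set S := \sum_i u ord0 i * v ord0 i.
have A0 : 0 <= A by apply: sumr_ge0 => i _; exact: sqr_ge0.
have B0 : 0 <= B by apply: sumr_ge0 => i _; exact: sqr_ge0.
have sum_sqrD : \sum_i (u + v) ord0 i ^+ 2 = A + 2 * S + B.
  rewrite mulr_sumr -!big_split /=.
  by apply: eq_bigr => i _; rewrite mxE; ring.
have S_le : S <= Num.sqrt A * Num.sqrt B.
  rewrite -sqrtrM // (le_trans (ler_norm S)) // -sqrtr_sqr ler_wsqrtr //.
  exact: sum_CauchySchwarz.
rewrite sum_sqrD -[leRHS]ger0_norm ?addr_ge0 ?sqrtr_ge0 // -sqrtr_sqr.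
by rewrite ler_wsqrtr // sqrrD !sqr_sqrtr // -mulr_natl; lra.
Qed.

Lemma enorm_distD u v w : enorm (u - w) <= enorm (u - v) + enorm (v - w).
Proof. by rewrite (le_trans _ (enormD _ _)) // addrA subrK. Qed.

End EuclideanNorm.

Section RatioBounds.
Context {R : rcfType}.
Implicit Types t m q a b : R.

Lemma ler_wpdivl2l t a b : 0 <= t -> 0 < a -> a <= b -> t / b <= t / a.
Proof.
move=> t0 a0 ab; rewrite ler_wpM2l // lef_pV2 // posrE.
exact: lt_le_trans ab.
Qed.

Lemma sqr_sdenom_le t m d1 d2 : 0 <= t -> 0 <= d1 -> 0 <= d2 -> t <= m ->
  m <= t + 2 * d1 -> m <= t + 2 * d2 -> m ^+ 2 <= 2 * (t ^+ 2 + 4 * d1 * d2).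
Proof.
wlog d12 : d1 d2 / d1 <= d2.
  move=> wlog_d12 t0 d1_0 d2_0 tm m1 m2.
  have [d12|d21] := lerP d1 d2; first exact: wlog_d12.
  by rewrite -mulrA [d1 * d2]mulrC mulrA wlog_d12 // ltW.
move=> t0 d1_0 d2_0 tm m1 _.
have m_sqr : m ^+ 2 <= (t + 2 * d1) ^+ 2 by rewrite ler_sqr ?nnegrE //; lra.
have := sqr_ge0 (t - 2 * d1).
have : 0 <= d1 * (d2 - d1) by rewrite mulr_ge0 // subr_ge0.
nra.
Qed.

Lemma sqr_pdenom_le t m d1 d2 : 0 <= t -> 0 <= d1 -> 0 <= d2 -> t <= m ->
  d1 + d2 <= m -> t ^+ 2 + 4 * d1 * d2 <= 2 * m ^+ 2.
Proof.
move=> t0 d1_0 d2_0 tm dm.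
have : t ^+ 2 <= m ^+ 2 by rewrite ler_sqr ?nnegrE //; lra.
have : (d1 + d2) ^+ 2 <= m ^+ 2 by rewrite ler_sqr ?nnegrE //; lra.
have := sqr_ge0 (d1 - d2); nra.
Qed.

Lemma ratio_sqrt2_bounds t m q : 0 <= t -> t <= m -> t ^+ 2 <= q ->
    m ^+ 2 <= 2 * q -> q <= 2 * m ^+ 2 ->
  (Num.sqrt 2)^-1 * (t / Num.sqrt q) <= t / m /\ t / m <= Num.sqrt 2 * (t / Num.sqrt q).
Proof.
move=> t0 tm tq mq qm.
have [->|t_neq0] := eqVneq t 0; first by rewrite !(mul0r, mulr0) lexx.
have t_gt0 : 0 < t by rewrite lt_def t_neq0.
have m_gt0 : 0 < m := lt_le_trans t_gt0 tm.
have q_gt0 : 0 < q by apply: lt_le_trans tq; rewrite exprn_gt0.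
have m_sqrt : m = Num.sqrt (m ^+ 2) by rewrite sqrtr_sqr gtr0_norm.
split.
- rewrite mulrCA -invfM -sqrtrM //; apply: ler_wpdivl2l => //.
  by rewrite m_sqrt ler_sqrt // mulr_ge0 // ltW.
- have -> : Num.sqrt 2 * (t / Num.sqrt q) = t / Num.sqrt (q / 2).
    by rewrite sqrtrM ?sqrtrV ?ltW // invfM invrK; ring.
  apply: ler_wpdivl2l => //; first by rewrite sqrtr_gt0 divr_gt0.
  by rewrite m_sqrt ler_sqrt ?sqr_ge0 // ler_pdivrMr // mulrC.
Qed.

Lemma two_div_sqrt8 : 2 / Num.sqrt (2 ^+ 2 + 4 * 1 * 1) = (Num.sqrt 2)^-1 :> R.
Proof.
rewrite (_ : 2 ^+ 2 + 4 * 1 * 1 = 2 ^+ 2 * 2); last by ring.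
by rewrite sqrtrM ?sqr_ge0 // sqrtr_sqr ger0_norm // invfM mulrA divff ?mul1r.
Qed.

Lemma invr_sqrt2 : (Num.sqrt 2)^-1 = Num.sqrt 2 / 2 :> R.
Proof.
have r2 : Num.sqrt 2 ^+ 2 = 2 :> R by rewrite sqr_sqrtr.
by rewrite -[X in _ / X]r2 expr2 invfM mulrA divff ?mul1r // sqrtr_eq0 -ltNge.
Qed.

End RatioBounds.

Section Infimum.
Context {T : Type} {R : realType} (f : T -> R).

Lemma lb_le_inf_image (B : set T) c :
  B !=set0 -> (forall z, B z -> c <= f z) -> c <= inf (f @` B).
Proof.
move=> [z Bz] c_lb; apply: lb_le_inf; first by exists (f z), z.
by move=> _ [w Bw <-]; exact: c_lb.
Qed.

Lemma inf_image_le (B : set T) z :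
  (forall w, B w -> 0 <= f w) -> B z -> inf (f @` B) <= f z.
Proof.
move=> f_ge0 Bz; apply: ge_inf; last by exists z.
by exists 0 => _ [w Bw <-]; exact: f_ge0.
Qed.

Lemma inf_image_set2 a b : inf (f @` [set a; b]) = Num.min (f a) (f b).
Proof.
have min_lb : lbound (f @` [set a; b]) (Num.min (f a) (f b)).
  by move=> _ [z [->|->] <-]; rewrite ge_min lexx ?orbT.
have inf_le z : [set a; b] z -> inf (f @` [set a; b]) <= f z.
  by move=> abz; apply: ge_inf; [exists (Num.min (f a) (f b)) | exists z].
apply/le_anti; rewrite lb_le_inf //; last by exists (f a), a; [left|].
by rewrite andbT le_min; apply/andP; split; apply: inf_le; [left|right].
Qed.

End Infimum.

Section Comparison.
Context {R : realType} {n : nat}.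
Variable G : set 'rV[R]_n.
Hypothesis bdry_neq0 : bdry G !=set0.

Lemma dG_ge0 x : 0 <= dG G x.
Proof. by apply: lb_le_inf_image => // z _; exact: enorm_ge0. Qed.

Lemma dG_le_enorm x z : bdry G z -> dG G x <= enorm (x - z).
Proof. by apply: inf_image_le => w _; exact: enorm_ge0. Qed.

Lemma sG_pG_bounds x y :
  (Num.sqrt 2)^-1 * pG G x y <= sG G x y /\ sG G x y <= Num.sqrt 2 * pG G x y.
Proof.
rewrite /sG /pG; set t := enorm (x - y).
set m := inf _.
have m_le z : bdry G z -> m <= enorm (x - z) + enorm (z - y).
  by apply: inf_image_le => w _; rewrite addr_ge0 ?enorm_ge0.
have t_le_m : t <= m by apply: lb_le_inf_image => // z _; exact: enorm_distD.
have d_le_m : dG G x + dG G y <= m.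
  apply: lb_le_inf_image => // z Bz.
  by rewrite (enorm_distC z); apply: lerD; exact: dG_le_enorm.
have m_le_x : m <= t + 2 * dG G x.
  suff : (m - t) / 2 <= dG G x by lra.
  apply: lb_le_inf_image => // z Bz.
  have := m_le z Bz; have := enorm_distD z x y; rewrite -/t (enorm_distC z x); lra.
have m_le_y : m <= t + 2 * dG G y.
  suff : (m - t) / 2 <= dG G y by lra.
  apply: lb_le_inf_image => // z Bz.
  have := m_le z Bz; have := enorm_distD x y z; rewrite -/t (enorm_distC z y); lra.
have t_ge0 : 0 <= t := enorm_ge0 _.
have dx_ge0 := dG_ge0 x; have dy_ge0 := dG_ge0 y.
apply: ratio_sqrt2_bounds => //.
- by have := mulr_ge0 dx_ge0 dy_ge0; lra.
- exact: sqr_sdenom_le.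
- exact: sqr_pdenom_le.
Qed.

End Comparison.

Section Segment.
Context {R : realType} {V : normedModType R}.
Implicit Types u v w : V.

Lemma continuous_ray u v : continuous (fun s : R => u + s *: v).
Proof. by move=> s; apply: cvgD; [exact: cvg_cst | exact: scalel_continuous]. Qed.

Definition seg u w : set V := [set u + s *: (w - u) | s in `[0, 1]].

Lemma seg_connected u w : connected (seg u w).
Proof.
apply: connected_continuous_connected; first exact: segment_connected.
exact/continuous_subspaceT/continuous_ray.
Qed.

Lemma seg_start u w : seg u w u.
Proof. by exists 0; [rewrite /= in_itv /= lexx ler01 | rewrite scale0r addr0]. Qed.

Lemma seg_end u w : seg u w w.
Proof. by exists 1; [rewrite /= in_itv /= lexx ler01 | rewrite scale1r addrC subrK]. Qed.

Lemma seg_sub (A : set V) u w :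
  (forall s, 0 <= s -> s <= 1 -> A (u + s *: (w - u))) -> seg u w `<=` A.
Proof. by move=> uwA _ [s /andP[s0 s1] <-]; exact: uwA. Qed.

Lemma closure_ray (A : set V) u v : (forall s, 0 < s -> A (u + s *: v)) -> closure A u.
Proof.
move=> rayA B uB.
have : (fun s : R => u + s *: v) @ 0 --> u.
  by have := continuous_ray u v 0; rewrite /continuous_at scale0r addr0.
move=> /(_ _ uB)/nbhs_ballP[e e_gt0 ballB].
exists (u + (e / 2) *: v); split; first by apply: rayA; exact: divr_gt0.
apply: ballB; rewrite /ball /= sub0r normrN gtr0_norm ?divr_gt0 //.
by rewrite ltr_pdivrMr // ltr_pMr // ltr1n.
Qed.

Lemma open_bdry_neq0 (G : set V) :
  open G -> G !=set0 -> G != setT -> closure G `\` interior G !=set0.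
Proof.
move=> oG [a Ga] /setTPn[b nGb]; apply: contrapT => no_bdry.
have cG : closed G.
  apply/closure_id/seteqP; split; first exact: subset_closure.
  move=> p Gp; apply: contrapT => nGp; apply: no_bdry; exists p; split => //.
  by move/interior_subset.
have segG : seg a b `&` G = seg a b.
  apply: seg_connected; first by exists a; split; [exact: seg_start|].
  - by exists G.
  - by exists G.
by apply: nGb; have := seg_end a b; rewrite -segG => -[].
Qed.

End Segment.

Section Axis.
Context {R : realType} {n : nat}.
Variable i : 'I_n.

Definition axis (c : R) : 'rV[R]_n := \row_j (if j == i then c else 0).

Lemma axisB a b : axis a - axis b = axis (a - b).
Proof. by apply/rowP => j; rewrite !mxE; case: ifP; rewrite ?subr0. Qed.

Lemma axis_inj : injective axis.
Proof. by move=> a b /rowP/(_ i); rewrite !mxE eqxx. Qed.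

Lemma enorm_axis c : enorm (axis c) = `|c|.
Proof.
rewrite /enorm (bigD1 i) //= big1 ?addr0 ?mxE ?eqxx ?sqrtr_sqr //.
by move=> j /negbTE ji; rewrite mxE ji expr0n.
Qed.

End Axis.

Section TwicePunctured.
Context {R : realType} {k : nat}.
Local Notation V := 'rV[R]_k.+2.
Local Notation i0 := (ord0 : 'I_k.+2).
Local Notation i1 := (lift ord0 ord0 : 'I_k.+2).
Local Notation e0 := (axis i0).
Local Notation e1 := (axis i1).

Definition twice_punctured : set V := ~` [set e0 0; e0 4].

Lemma mem_twice_punctured (p : V) : p ord0 i1 <> 0 \/ p ord0 i0 < 0 -> twice_punctured p.
Proof. by move=> crit; case=> p_eq; move: crit; rewrite p_eq !mxE lift_eqF eqxx; lra. Qed.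

Lemma axis_twice_punctured c : c <> 0 -> c <> 4 -> twice_punctured (e0 c).
Proof. by move=> c0 c4 [] /axis_inj. Qed.

Lemma twice_punctured_open : open twice_punctured.
Proof.
apply/closed_openC/closedU;
  exact/accessible_closed_set1/hausdorff_accessible/norm_hausdorff.
Qed.

(* Each p is joined to the hub by moving away from the axis of e0 along e1,
   on the side of the sign of its e1-coordinate, and then to +-e1; the hub
   joins -e1 and e1 through -e0, avoiding both punctures. *)
Definition up_sign (p : V) : R := if 0 <= p ord0 i1 then 1 else -1.

Definition hub : set V := seg (e1 (-1)) (e0 (-1)) `|` seg (e0 (-1)) (e1 1).

Definition path_to_hub (p : V) : set V :=
  seg p (p + e1 (up_sign p)) `|` (seg (p + e1 (up_sign p)) (e1 (up_sign p)) `|` hub).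

Lemma hub_connected : connected hub.
Proof.
apply: connectedU; [|exact: seg_connected..].
by exists (e0 (-1)); split; [exact: seg_end | exact: seg_start].
Qed.

Lemma hub_up_sign p : hub (e1 (up_sign p)).
Proof.
by rewrite /up_sign; case: ifP => _; [right; exact: seg_end | left; exact: seg_start].
Qed.

Lemma path_to_hub_connected p : connected (path_to_hub p).
Proof.
apply: connectedU; [|exact: seg_connected|].
  by exists (p + e1 (up_sign p)); split; [exact: seg_end | left; exact: seg_start].
apply: connectedU; [|exact: seg_connected|exact: hub_connected].
by exists (e1 (up_sign p)); split; [exact: seg_end | exact: hub_up_sign].
Qed.

Lemma path_to_hub_sub p : twice_punctured p -> path_to_hub p `<=` twice_punctured.
Proof.
move=> Gp; rewrite /path_to_hub /hub !subUset; split; [|split; [|split]];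
  apply: seg_sub => s s0 s1.
- move: s0; rewrite le0r => /predU1P[->|s_gt0]; first by rewrite scale0r addr0.
  apply: mem_twice_punctured; left; rewrite !mxE eqxx /up_sign.
  by case: lerP => p1; lra.
- apply: mem_twice_punctured; left; rewrite !mxE eqxx /up_sign.
  by case: lerP => p1; nra.
- apply: mem_twice_punctured; rewrite !mxE !eqxx eq_liftF lift_eqF; lra.
- apply: mem_twice_punctured; rewrite !mxE !eqxx eq_liftF lift_eqF; lra.
Qed.

Lemma twice_punctured_connected : connected twice_punctured.
Proof.
have -> : twice_punctured = \bigcup_(p in twice_punctured) path_to_hub p.
  apply/seteqP; split => [p Gp|q [p Gp]]; last exact: path_to_hub_sub.
  by exists p => //; left; exact: seg_start.
apply: bigcup_connected => [|p _]; last exact: path_to_hub_connected.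
by exists (e1 1) => p _; right; right; right; exact: seg_end.
Qed.

Lemma twice_punctured_domain : domain twice_punctured.
Proof.
split; [exact: twice_punctured_open | split; [exact: twice_punctured_connected|]].
split; first by exists (e1 1); apply: mem_twice_punctured; left; rewrite mxE eqxx; lra.
by apply/setTPn; exists (e0 0); apply; left.
Qed.

Lemma bdry_twice_punctured : bdry twice_punctured = [set e0 0; e0 4].
Proof.
apply/seteqP; split => p.
  move=> [_ not_int]; apply: contrapT => p_in; apply: not_int.
  by move/interior_id: twice_punctured_open ->.
move=> p_bd; split; last by move/interior_subset; apply.
apply: (closure_ray twice_punctured p (e1 1)) => s s_gt0.
apply: mem_twice_punctured; left.
by case: p_bd => ->; rewrite !mxE eqxx lift_eqF; lra.
Qed.

Lemma dG_axis c : dG twice_punctured (e0 c) = Num.min `|c| `|c - 4|.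
Proof. by rewrite /dG bdry_twice_punctured inf_image_set2 !axisB !enorm_axis subr0. Qed.

Lemma dG_axis_1 : dG twice_punctured (e0 1) = 1.
Proof. by rewrite dG_axis normr1 ler0_norm ?min_l //; lra. Qed.

Lemma sG_axis a b : sG twice_punctured (e0 a) (e0 b) =
  `|a - b| / Num.min (`|a| + `|b|) (`|a - 4| + `|b - 4|).
Proof.
rewrite /sG bdry_twice_punctured.
rewrite (inf_image_set2 (fun z => enorm (e0 a - z) + enorm (z - e0 b))).
by rewrite !axisB !enorm_axis subr0 sub0r normrN (distrC 4).
Qed.

Lemma pG_axis a b : pG twice_punctured (e0 a) (e0 b) = `|a - b| /
  Num.sqrt (`|a - b| ^+ 2 + 4 * dG twice_punctured (e0 a) * dG twice_punctured (e0 b)).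
Proof. by rewrite /pG axisB enorm_axis. Qed.

Lemma sG_pG_axis_1_3 :
  sG twice_punctured (e0 1) (e0 3) = 2^-1 /\
  pG twice_punctured (e0 1) (e0 3) = (Num.sqrt 2)^-1.
Proof.
have n13 : `|1 - 3| = 2 :> R by rewrite ler0_norm; lra.
have n14 : `|1 - 4| = 3 :> R by rewrite ler0_norm; lra.
have n34 : `|3 - 4| = 1 :> R by rewrite ler0_norm; lra.
have d3 : dG twice_punctured (e0 3) = 1.
  by rewrite dG_axis normr_nat n34 min_r //; lra.
rewrite sG_axis pG_axis dG_axis_1 d3 n13 n14 n34 normr1 normr_nat.
split; last exact: two_div_sqrt8.
by rewrite [3 + 1]addrC minxx; field.
Qed.

Lemma sG_pG_axis_N1_1 :
  sG twice_punctured (e0 (-1)) (e0 1) = 1 /\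
  pG twice_punctured (e0 (-1)) (e0 1) = (Num.sqrt 2)^-1.
Proof.
have n11 : `|-1 - 1| = 2 :> R by rewrite ler0_norm; lra.
have n14 : `|-1 - 4| = 5 :> R by rewrite ler0_norm; lra.
have d_N1 : dG twice_punctured (e0 (-1)) = 1.
  by rewrite dG_axis normrN1 n14 min_l //; lra.
rewrite sG_axis pG_axis dG_axis_1 d_N1 n11 normrN1 normr1 n14 ler0_norm ?min_l.
- by split; [field | exact: two_div_sqrt8].
- lra.
- lra.
Qed.

Lemma lower_sqrt2_sharp c :
  (forall G : set 'rV[R]_k.+2, domain G -> forall x y, G x -> G y ->
     c * pG G x y <= sG G x y) -> c <= (Num.sqrt 2)^-1.
Proof.
move=> c_lower; have [s13 p13] := sG_pG_axis_1_3.
have G1 : twice_punctured (e0 1) by apply: axis_twice_punctured; lra.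
have G3 : twice_punctured (e0 3) by apply: axis_twice_punctured; lra.
have := c_lower _ twice_punctured_domain _ _ G1 G3.
rewrite s13 p13 invr_sqrt2 => c_le.
have r2 : Num.sqrt 2 ^+ 2 = 2 :> R by rewrite sqr_sqrtr.
have r_gt0 : 0 < Num.sqrt 2 :> R by rewrite sqrtr_gt0.
nra.
Qed.

Lemma upper_sqrt2_sharp c :
  (forall G : set 'rV[R]_k.+2, domain G -> forall x y, G x -> G y ->
     sG G x y <= c * pG G x y) -> Num.sqrt 2 <= c.
Proof.
move=> c_upper; have [s_N1_1 p_N1_1] := sG_pG_axis_N1_1.
have G_N1 : twice_punctured (e0 (-1)) by apply: axis_twice_punctured; lra.
have G1 : twice_punctured (e0 1) by apply: axis_twice_punctured; lra.
have := c_upper _ twice_punctured_domain _ _ G_N1 G1.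
rewrite s_N1_1 p_N1_1 invr_sqrt2 => le_c.
have r2 : Num.sqrt 2 ^+ 2 = 2 :> R by rewrite sqr_sqrtr.
have r_gt0 : 0 < Num.sqrt 2 :> R by rewrite sqrtr_gt0.
nra.
Qed.

End TwicePunctured.

Theorem theorem3p5 (R : realType) (n : nat) (hn : (2 <= n)%N) :
  (* the inequality *)
  (forall (G : set 'rV[R]_n), domain G -> forall x y, G x -> G y ->
      (Num.sqrt 2)^-1 * pG G x y <= sG G x y /\ sG G x y <= Num.sqrt 2 * pG G x y)
  /\
  (* sharpness of the lower constant 1/sqrt 2 *)
  (forall c : R,
      (forall (G : set 'rV[R]_n), domain G -> forall x y, G x -> G y ->
          c * pG G x y <= sG G x y) -> c <= (Num.sqrt 2)^-1)
  /\
  (* sharpness of the upper constant sqrt 2 *)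
  (forall c : R,
      (forall (G : set 'rV[R]_n), domain G -> forall x y, G x -> G y ->
          sG G x y <= c * pG G x y) -> Num.sqrt 2 <= c).
Proof.
case: n hn => [|[|k]] // _; split; last split.
- move=> G [G_open [_ [G_neq0 G_neqT]]] x y _ _.
  by apply: sG_pG_bounds; exact: open_bdry_neq0.
- exact: lower_sqrt2_sharp.
- exact: upper_sqrt2_sharp.
Qed.
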